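(* Let $\alpha\in(-1,1)^N$ with $\alpha\neq0$. The set-valued map $\mathcal{F}^\alpha:\mathcal{C}(I)\rightrightarrows\mathcal{C}(I)$, $\mathcal{F}^\alpha(f)=\{f^\alpha_{\Delta,B_n(f)}:n\in\mathbb{N}\}$, is not convex, and in particular not linear.
   Context: $I=[x_0,x_N]$, $\mathcal{C}(I)$ real continuous functions with sup norm, $\Delta=\{x_0<\dots<x_N\}$, $N\ge2$, $I_i=[x_{i-1},x_i]$, $L_i(x)=a_ix+b_i$ the affine map of $I$ onto $I_i$ with $L_i(x_0)=x_{i-1}$, $L_i(x_N)=x_i$. For $f,b\in\mathcal{C}(I)$ with $b(x_0)=f(x_0)$, $b(x_N)=f(x_N)$, $f^\alpha_{\Delta,b}$ is the unique $g\in\mathcal{C}(I)$ with $g(x)=f(x)+\alpha_i(g-b)(L_i^{-1}(x))$ for $x\in I_i$. $B_n$ is the Bernstein operator $B_nf(x)=\sum_{k=0}^n f\big(x_0+\tfrac kn(x_N-x_0)\big)\binom nk\frac{(x-x_0)^k(x_N-x)^{n-k}}{(x_N-x_0)^n}$. A set-valued map $T:X\rightrightarrows Y$ is convex if $\lambda T(x_1)+(1-\lambda)T(x_2)\subseteq T(\lambda x_1+(1-\lambda)x_2)$ for all $x_1,x_2$ in its domain and $\lambda\in[0,1]$; it is linear if $\beta T(x_1)+\gamma T(x_2)\subseteq T(\beta x_1+\gamma x_2)$ for all $x_1,x_2$ in its domain and $\beta,\gamma\in\mathbb{R}$. *)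

From Stdlib Require Import Reals Lra Lia.
Open Scope R_scope.

Definition cont_on (a b : R) (f : R -> R) : Prop :=
  forall t, a <= t <= b -> limit1_in f (fun y => a <= y <= b) (f t) t.

(* Partition Delta = {x 0 < ... < x N}; I_i = [x (i-1), x i] for 1 <= i <= N.
   L_i is the affine map of I onto I_i with L_i(x 0) = x (i-1), L_i(x N) = x i;
   Linv x N i is its inverse L_i^{-1} : I_i -> I. *)
Definition Linv (x : nat -> R) (N i : nat) (y : R) : R :=
  x 0%nat + (y - x (i - 1)%nat) * (x N - x 0%nat) / (x i - x (i - 1)%nat).

Definition bernstein (x : nat -> R) (N n : nat) (f : R -> R) (t : R) : R :=
  sum_f_R0 (fun k =>
     f (x 0%nat + INR k / INR n * (x N - x 0%nat)) * C n k
       * (t - x 0%nat) ^ k * (x N - t) ^ (n - k) / (x N - x 0%nat) ^ n) n.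

Definition is_fractal (x : nat -> R) (N : nat) (alpha : nat -> R)
  (f b g : R -> R) : Prop :=
  cont_on (x 0%nat) (x N) g /\
  forall i : nat, (1 <= i <= N)%nat ->
  forall t, x (i - 1)%nat <= t <= x i ->
    g t = f t + alpha i * (g (Linv x N i t) - b (Linv x N i t)).

Definition Falpha (x : nat -> R) (N : nat) (alpha : nat -> R)
  (f g : R -> R) : Prop :=
  exists n : nat, (1 <= n)%nat /\ is_fractal x N alpha f (bernstein x N n f) g.

(* Convexity / linearity of a set-valued map T : X ⇉ Y with domain D,
   T given as a relation (T f g  <->  g ∈ T(f)). *)
Definition convex_svm (D : (R -> R) -> Prop) (T : (R -> R) -> (R -> R) -> Prop) : Prop :=
  forall f1 f2, D f1 -> D f2 -> forall l, 0 <= l <= 1 ->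
  forall g1 g2, T f1 g1 -> T f2 g2 ->
    T (fun t => l * f1 t + (1 - l) * f2 t) (fun t => l * g1 t + (1 - l) * g2 t).

Definition linear_svm (D : (R -> R) -> Prop) (T : (R -> R) -> (R -> R) -> Prop) : Prop :=
  forall f1 f2, D f1 -> D f2 -> forall be ga : R,
  forall g1 g2, T f1 g1 -> T f2 g2 ->
    T (fun t => be * f1 t + ga * f2 t) (fun t => be * g1 t + ga * g2 t).

From Stdlib Require Import Reals Lra Lia.
Open Scope R_scope.

(* Let Q(t) = (t - x_0)(x_N - t) and let P = max(Q, 0), a bump supported on I.
   Put S(t) = sum_j alpha_j P(L_j^{-1} t) and T = P - S.  On each I_i only the i-th
   term of S survives, so for every continuous base b and every k the function b + kP
   is the alpha-fractal function of f = b + kT with base b.  Choosing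
     - b = 0 = B_1 T, k = 1:   P belongs to F^alpha(T);
     - b = sQ = B_2 (sQ - T), k = -1, with s = -4 T(m)/(x_N - x_0)^2 (m the midpoint):
       sQ - P belongs to F^alpha(sQ - T).
   If F^alpha were convex, the average sQ/2 of these would lie in F^alpha(sQ/2), i.e.
   be the fractal function of sQ/2 with base B_n(sQ/2) for some n.  It is also the
   fractal function with the averaged base (0 + sQ)/2, and a nonzero alpha_i forces
   the two bases to agree on I; but B_n Q(m) < Q(m) while T(m) > 0 makes s <> 0.
   Linear set-valued maps are convex, so F^alpha is not linear either. *)

Section Partition.
Variables (x : nat -> R) (N : nat).
Hypothesis Hx : forall i : nat, (i < N)%nat -> x i < x (S i).

Lemma x_mono (a b : nat) : (a <= b <= N)%nat -> x a <= x b.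
Proof.
  intros [Hab HbN]; induction b as [|b IH].
  - replace a with 0%nat by lia; lra.
  - destruct (Nat.eq_dec a (S b)) as [->|Hne]; [lra|].
    apply Rle_trans with (x b); [apply IH; lia|left; apply Hx; lia].
Qed.

Lemma x_step (j : nat) : (1 <= j <= N)%nat -> x (j - 1)%nat < x j.
Proof.
  intros Hj; destruct j as [|j]; [lia|].
  replace (S j - 1)%nat with j by lia; apply Hx; lia.
Qed.

Lemma x_ends : (1 <= N)%nat -> x 0%nat < x N.
Proof.
  intros HN; apply Rle_lt_trans with (x (N - 1)%nat).
  - apply x_mono; lia.
  - apply x_step; lia.
Qed.

Lemma subinterval_cover (y : R) :
  (1 <= N)%nat -> x 0%nat <= y <= x N ->
  exists i, (1 <= i <= N)%nat /\ x (i - 1)%nat <= y <= x i.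
Proof.
  intros HN Hy.
  assert (Hk : forall k, (1 <= k <= N)%nat -> y <= x k ->
            exists i, (1 <= i <= N)%nat /\ x (i - 1)%nat <= y <= x i).
  { intros k; induction k as [|[|k] IH]; intros Hk Hyk; [lia| |].
    - exists 1%nat; simpl; split; [lia|lra].
    - destruct (Rle_dec y (x (S k))) as [Hle|Hgt].
      + apply IH; [lia|lra].
      + exists (S (S k)); replace (S (S k) - 1)%nat with (S k) by lia; split; [lia|lra]. }
  apply (Hk N); [lia|lra].
Qed.
End Partition.

Section Bernstein.
Variables (x : nat -> R) (N : nat).
Hypothesis HI : x 0%nat < x N.

Definition bweight (n k : nat) (t : R) : R :=
  C n k * (t - x 0%nat) ^ k * (x N - t) ^ (n - k) / (x N - x 0%nat) ^ n.

Definition bnode (n k : nat) : R := x 0%nat + INR k / INR n * (x N - x 0%nat).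

Lemma bernstein_weights (n : nat) (f : R -> R) (t : R) :
  bernstein x N n f t = sum_f_R0 (fun k => f (bnode n k) * bweight n k t) n.
Proof. apply sum_eq; intros k _; unfold bweight, bnode, Rdiv; ring. Qed.

Lemma bweight_nonneg (n k : nat) (t : R) :
  x 0%nat <= t <= x N -> 0 <= bweight n k t.
Proof.
  intros Ht; unfold bweight, Rdiv.
  assert (HC : 0 <= C n k).
  { unfold C, Rdiv; apply Rmult_le_pos; [apply pos_INR|].
    left; apply Rinv_0_lt_compat, Rmult_lt_0_compat; apply INR_fact_lt_0. }
  apply Rmult_le_pos.
  - apply Rmult_le_pos; [apply Rmult_le_pos; [exact HC|]|]; apply pow_le; lra.
  - left; apply Rinv_0_lt_compat, pow_lt; lra.
Qed.

Lemma bweight_sum (n : nat) (t : R) : sum_f_R0 (fun k => bweight n k t) n = 1.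
Proof.
  transitivity (sum_f_R0 (fun k => C n k * (t - x 0%nat) ^ k * (x N - t) ^ (n - k)) n
                * / (x N - x 0%nat) ^ n).
  - rewrite Rmult_comm, scal_sum; apply sum_eq; intros k _; unfold bweight, Rdiv; ring.
  - rewrite <- binomial; replace (t - x 0%nat + (x N - t)) with (x N - x 0%nat) by ring.
    apply Rinv_r, pow_nonzero; lra.
Qed.

(* Strict monotonicity: the weight of the node x_0 is positive on [x_0, x_N). *)
Lemma bernstein_lt (n : nat) (f g : R -> R) (t : R) :
  x 0%nat <= t < x N -> (1 <= n)%nat ->
  (forall y, f y <= g y) -> f (x 0%nat) < g (x 0%nat) ->
  bernstein x N n f t < bernstein x N n g t.
Proof.
  intros Ht Hn Hfg H0.
  rewrite !bernstein_weights, !(decomp_sum _ n) by lia.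
  apply Rplus_lt_le_compat.
  - assert (Hw0 : 0 < bweight n 0 t).
    { unfold bweight; rewrite Nat.sub_0_r.
      replace (C n 0) with 1 by (unfold C; rewrite Nat.sub_0_r; simpl; field; apply INR_fact_neq_0).
      unfold Rdiv; apply Rmult_lt_0_compat; [|apply Rinv_0_lt_compat, pow_lt; lra].
      simpl; rewrite !Rmult_1_l; apply pow_lt; lra. }
    replace (bnode n 0) with (x 0%nat) by (unfold bnode, Rdiv; simpl; ring).
    apply Rmult_lt_compat_r; assumption.
  - apply sum_Rle; intros k _.
    apply Rmult_le_compat_r; [apply bweight_nonneg; lra|apply Hfg].
Qed.

Lemma bernstein_const (n : nat) (c t : R) : bernstein x N n (fun _ => c) t = c.
Proof.
  rewrite bernstein_weights; transitivity (c * sum_f_R0 (fun k => bweight n k t) n).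
  - rewrite scal_sum; apply sum_eq; intros k _; ring.
  - rewrite bweight_sum; ring.
Qed.

Lemma bernstein_scal (n : nat) (f g : R -> R) (a t : R) :
  (forall y, f y = a * g y) -> bernstein x N n f t = a * bernstein x N n g t.
Proof.
  intros Hfg; rewrite !bernstein_weights, scal_sum.
  apply sum_eq; intros k _; rewrite Hfg; ring.
Qed.

(* B_1 f interpolates f linearly between the endpoints, so it vanishes when f does there. *)
Lemma bernstein1_vanishing (f : R -> R) (t : R) :
  f (x 0%nat) = 0 -> f (x N) = 0 -> bernstein x N 1 f t = 0.
Proof.
  intros H0 HN; unfold bernstein; simpl.
  replace (x 0%nat + 0 / 1 * (x N - x 0%nat)) with (x 0%nat) by (unfold Rdiv; ring).
  replace (x 0%nat + 1 / 1 * (x N - x 0%nat)) with (x N) by field.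
  rewrite H0, HN; unfold Rdiv; ring.
Qed.

Lemma bernstein2_vanishing (f : R -> R) (t : R) :
  f (x 0%nat) = 0 -> f (x N) = 0 ->
  bernstein x N 2 f t
  = 2 * f ((x 0%nat + x N) / 2) * ((t - x 0%nat) * (x N - t)) / (x N - x 0%nat) ^ 2.
Proof.
  intros H0 HN; unfold bernstein; simpl.
  replace (x 0%nat + 0 / (1 + 1) * (x N - x 0%nat)) with (x 0%nat) by (unfold Rdiv; ring).
  replace (x 0%nat + 1 / (1 + 1) * (x N - x 0%nat)) with ((x 0%nat + x N) / 2) by field.
  replace (x 0%nat + (1 + 1) / (1 + 1) * (x N - x 0%nat)) with (x N) by field.
  replace (C 2 1) with 2 by (unfold C; simpl; field).
  rewrite H0, HN; field; lra.
Qed.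
End Bernstein.

(* Q(t) = (t - x_0)(x_N - t), the bump P = max(Q, 0) supported on I, the localized
   sum S(t) = sum_(j=1..N) alpha_j P(L_j^{-1} t) and T = P - S. *)
Definition quad (x : nat -> R) (N : nat) (t : R) : R := (t - x 0%nat) * (x N - t).
Definition bump (x : nat -> R) (N : nat) (t : R) : R := (quad x N t + Rabs (quad x N t)) / 2.
Fixpoint sumto (n : nat) (F : nat -> R) : R :=
  match n with O => 0 | S k => sumto k F + F (S k) end.
Definition bump_sum (x : nat -> R) (N : nat) (alpha : nat -> R) (t : R) : R :=
  sumto N (fun j => alpha j * bump x N (Linv x N j t)).
Definition bump_base (x : nat -> R) (N : nat) (alpha : nat -> R) (t : R) : R :=
  bump x N t - bump_sum x N alpha t.

Lemma quad_le_max (x : nat -> R) (N : nat) (y : R) :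
  quad x N y <= (x N - x 0%nat) ^ 2 / 4.
Proof. unfold quad; pose proof (pow2_ge_0 (y - (x 0%nat + x N) / 2)); nra. Qed.

Lemma bump_nonpos (x : nat -> R) (N : nat) (y : R) : quad x N y <= 0 -> bump x N y = 0.
Proof. intros H; unfold bump; rewrite Rabs_left1 by exact H; field. Qed.

Lemma bump_nonneg (x : nat -> R) (N : nat) (y : R) : 0 <= quad x N y -> bump x N y = quad x N y.
Proof. intros H; unfold bump; rewrite Rabs_pos_eq by exact H; field. Qed.

Lemma bump_bounds (x : nat -> R) (N : nat) (y : R) :
  0 <= bump x N y <= (x N - x 0%nat) ^ 2 / 4.
Proof.
  pose proof (quad_le_max x N y) as Hq; pose proof (pow2_ge_0 (x N - x 0%nat)).
  destruct (Rle_dec 0 (quad x N y)) as [Hp|Hn].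
  - rewrite bump_nonneg by exact Hp; lra.
  - rewrite bump_nonpos by lra; lra.
Qed.

Lemma sumto_single (n i : nat) (F : nat -> R) : (1 <= i <= n)%nat ->
  (forall j, (1 <= j <= n)%nat -> j <> i -> F j = 0) -> sumto n F = F i.
Proof.
  revert i; induction n as [|n IH]; intros i Hi H; [lia|]; simpl.
  destruct (Nat.eq_dec i (S n)) as [->|Hne].
  - enough (Hz : forall m, (m <= n)%nat -> sumto m F = 0) by (rewrite Hz by lia; ring).
    intros m; induction m as [|m IHm]; intros Hm; simpl; [reflexivity|].
    rewrite IHm, H by lia; ring.
  - rewrite (IH i), (H (S n)) by (lia || (intros; apply H; lia)); ring.
Qed.

Section Bump.
Variables (x : nat -> R) (N : nat) (alpha : nat -> R).
Hypothesis Hx : forall i : nat, (i < N)%nat -> x i < x (S i).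

(* For j <> i, L_j^{-1} maps I_i outside (x_0, x_N), where the bump vanishes. *)
Lemma bump_off_subinterval (i j : nat) (t : R) :
  (1 <= i <= N)%nat -> (1 <= j <= N)%nat -> j <> i -> x (i - 1)%nat <= t <= x i ->
  bump x N (Linv x N j t) = 0.
Proof.
  intros Hi Hj Hne Ht; apply bump_nonpos.
  pose proof (x_step x N Hx j Hj) as Hd.
  assert (HD : x 0%nat < x N) by (apply (x_ends x N Hx); lia).
  set (r := (x N - x 0%nat) / (x j - x (j - 1)%nat)).
  assert (Hr : 0 < r) by (apply Rdiv_lt_0_compat; lra).
  unfold quad; set (y := Linv x N j t).
  destruct (Nat.lt_ge_cases j i).
  - assert (x j <= t) by (apply Rle_trans with (x (i - 1)%nat); [apply (x_mono x N Hx); lia|lra]).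
    assert (y - x N = (t - x j) * r) by (unfold y, r, Linv; field; lra).
    assert (0 <= (t - x j) * r) by (apply Rmult_le_pos; lra).
    nra.
  - assert (t <= x (j - 1)%nat) by (apply Rle_trans with (x i); [lra|apply (x_mono x N Hx); lia]).
    assert (y - x 0%nat = (t - x (j - 1)%nat) * r) by (unfold y, r, Linv; field; lra).
    assert ((t - x (j - 1)%nat) * r <= 0) by nra.
    nra.
Qed.

Lemma bump_sum_local (i : nat) (t : R) :
  (1 <= i <= N)%nat -> x (i - 1)%nat <= t <= x i ->
  bump_sum x N alpha t = alpha i * bump x N (Linv x N i t).
Proof.
  intros Hi Ht; apply (sumto_single N i (fun j => alpha j * bump x N (Linv x N j t)) Hi).
  intros j Hj Hne; rewrite (bump_off_subinterval i j t Hi Hj Hne Ht); ring.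
Qed.

Hypothesis HN : (1 <= N)%nat.

Lemma bump_base_ends : bump_base x N alpha (x 0%nat) = 0 /\ bump_base x N alpha (x N) = 0.
Proof.
  pose proof (x_step x N Hx 1 ltac:(lia)) as H1; simpl in H1.
  pose proof (x_step x N Hx N ltac:(lia)) as HNs.
  assert (Hzero : forall y, quad x N y = 0 -> bump x N y = 0)
    by (intros y Hy; apply bump_nonpos; lra).
  unfold bump_base; split.
  - rewrite (bump_sum_local 1 (x 0%nat)) by (simpl; lia || lra).
    replace (Linv x N 1 (x 0%nat)) with (x 0%nat) by (unfold Linv; simpl; unfold Rdiv; ring).
    rewrite Hzero by (unfold quad; ring); ring.
  - rewrite (bump_sum_local N (x N)) by (lia || lra).
    replace (Linv x N N (x N)) with (x N) by (unfold Linv; field; lra).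
    rewrite Hzero by (unfold quad; ring); ring.
Qed.

(* Since |alpha_i| < 1, the bump dominates the bump sum at the midpoint of I. *)
Lemma bump_base_mid_pos :
  (forall i : nat, (1 <= i <= N)%nat -> -1 < alpha i < 1) ->
  0 < bump_base x N alpha ((x 0%nat + x N) / 2).
Proof.
  intros Halpha; set (m := (x 0%nat + x N) / 2).
  assert (HD : x 0%nat < x N) by (apply (x_ends x N Hx); lia).
  destruct (subinterval_cover x N m HN ltac:(unfold m; lra)) as [i [Hi Hm]].
  unfold bump_base; rewrite (bump_sum_local i m Hi Hm).
  rewrite bump_nonneg by (unfold quad, m; nra).
  pose proof (bump_bounds x N (Linv x N i m)); specialize (Halpha i Hi).
  replace (quad x N m) with ((x N - x 0%nat) ^ 2 / 4) by (unfold quad, m; field).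
  assert (HK : 0 < (x N - x 0%nat) ^ 2 / 4) by nra.
  set (K := (x N - x 0%nat) ^ 2 / 4) in *; set (b := bump x N (Linv x N i m)) in *.
  destruct (Rle_dec (alpha i) 0); nra.
Qed.
End Bump.

Lemma cont_on_of_continuous (a b : R) (f : R -> R) :
  (forall t, continuity_pt f t) -> cont_on a b f.
Proof.
  intros Hf t _ eps Heps; destruct (Hf t eps Heps) as [delta [Hdelta Hclose]].
  exists delta; split; [exact Hdelta|]; intros y [_ Hy].
  destruct (Req_dec t y) as [<-|Hne].
  - simpl; unfold R_dist; rewrite Rminus_diag_eq, Rabs_R0 by reflexivity; exact Heps.
  - apply Hclose; repeat split; auto.
Qed.

Lemma bump_continuous (x : nat -> R) (N : nat) (t : R) : continuity_pt (bump x N) t.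
Proof. unfold bump, quad; reg. Qed.

Lemma bump_sum_continuous (x : nat -> R) (N : nat) (alpha : nat -> R) (t : R) :
  continuity_pt (bump_sum x N alpha) t.
Proof.
  unfold bump_sum; generalize N at 1 as n; intros n.
  induction n as [|n IH]; simpl; [reg|].
  apply (continuity_pt_plus (fun y => sumto n (fun j => alpha j * bump x N (Linv x N j y)))
                            (fun y => alpha (S n) * bump x N (Linv x N (S n) y))); [exact IH|].
  unfold bump, quad, Linv; reg.
Qed.

Lemma bump_base_continuous (x : nat -> R) (N : nat) (alpha : nat -> R) (t : R) :
  continuity_pt (bump_base x N alpha) t.
Proof.
  apply (continuity_pt_minus (bump x N) (bump_sum x N alpha));
    [apply bump_continuous|apply bump_sum_continuous].
Qed.

Definition fractal_eq (x : nat -> R) (N : nat) (alpha : nat -> R) (f b g : R -> R) : Prop :=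
  forall i : nat, (1 <= i <= N)%nat ->
  forall t, x (i - 1)%nat <= t <= x i ->
    g t = f t + alpha i * (g (Linv x N i t) - b (Linv x N i t)).

Section FractalEquation.
Variables (x : nat -> R) (N : nat) (alpha : nat -> R).
Hypothesis Hx : forall i : nat, (i < N)%nat -> x i < x (S i).

Lemma fractal_eq_lincomb (l mu : R) (f1 b1 g1 f2 b2 g2 : R -> R) :
  fractal_eq x N alpha f1 b1 g1 -> fractal_eq x N alpha f2 b2 g2 ->
  fractal_eq x N alpha (fun t => l * f1 t + mu * f2 t) (fun t => l * b1 t + mu * b2 t)
                       (fun t => l * g1 t + mu * g2 t).
Proof. intros H1 H2 i Hi t Ht; rewrite (H1 i Hi t Ht), (H2 i Hi t Ht); ring. Qed.

(* A single nonzero scaling factor alpha_i determines the base function b on all of I,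
   because L_i^{-1} maps I_i onto I. *)
Lemma fractal_eq_base_unique (i : nat) (f b b' g : R -> R) :
  (1 <= i <= N)%nat -> alpha i <> 0 ->
  fractal_eq x N alpha f b g -> fractal_eq x N alpha f b' g ->
  forall y, x 0%nat <= y <= x N -> b y = b' y.
Proof.
  intros Hi Ha Hb Hb' y Hy.
  assert (HD : x 0%nat < x N) by (apply (x_ends x N Hx); lia).
  pose proof (x_step x N Hx i Hi) as Hstep.
  set (r := (y - x 0%nat) / (x N - x 0%nat)).
  assert (Hr : 0 <= r <= 1).
  { assert (r * (x N - x 0%nat) = y - x 0%nat) by (unfold r; field; lra); nra. }
  set (t := x (i - 1)%nat + r * (x i - x (i - 1)%nat)).
  assert (Ht : x (i - 1)%nat <= t <= x i) by (unfold t; nra).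
  assert (HL : Linv x N i t = y) by (unfold Linv, t, r; field; lra).
  pose proof (Hb i Hi t Ht) as E; rewrite (Hb' i Hi t Ht), HL in E.
  apply Rmult_eq_reg_l with (alpha i); [lra|exact Ha].
Qed.

Lemma fractal_of_bump (k : R) (f b g : R -> R) :
  cont_on (x 0%nat) (x N) g ->
  (forall t, f t = b t + k * bump_base x N alpha t) ->
  (forall t, g t = b t + k * bump x N t) ->
  is_fractal x N alpha f b g.
Proof.
  intros Hg Hf Hgb; split; [exact Hg|]; intros i Hi t Ht.
  rewrite Hf, !Hgb; unfold bump_base; rewrite (bump_sum_local x N alpha Hx i t Hi Ht); ring.
Qed.
End FractalEquation.

Lemma linear_svm_convex (D : (R -> R) -> Prop) (T : (R -> R) -> (R -> R) -> Prop) :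
  linear_svm D T -> convex_svm D T.
Proof. intros Hlin f1 f2 H1 H2 l _; exact (Hlin f1 f2 H1 H2 l (1 - l)). Qed.

(* The second seed tilted_base = s Q - T and its fractal function tilted_bump = s Q - P,
   where the slope s = -4 T(m)/(x_N - x_0)^2 is tuned so that B_2 (s Q - T) = s Q. *)
Definition bump_slope (x : nat -> R) (N : nat) (alpha : nat -> R) : R :=
  - 4 * bump_base x N alpha ((x 0%nat + x N) / 2) / (x N - x 0%nat) ^ 2.
Definition tilted_base (x : nat -> R) (N : nat) (alpha : nat -> R) (t : R) : R :=
  bump_slope x N alpha * quad x N t - bump_base x N alpha t.
Definition tilted_bump (x : nat -> R) (N : nat) (alpha : nat -> R) (t : R) : R :=
  bump_slope x N alpha * quad x N t - bump x N t.

Section Counterexample.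
Variables (x : nat -> R) (N : nat) (alpha : nat -> R).
Hypothesis Hx : forall i : nat, (i < N)%nat -> x i < x (S i).
Hypothesis HN : (1 <= N)%nat.

Lemma bump_fractal :
  is_fractal x N alpha (bump_base x N alpha) (bernstein x N 1 (bump_base x N alpha)) (bump x N).
Proof.
  destruct (bump_base_ends x N alpha Hx HN) as [HT0 HTN].
  apply (fractal_of_bump x N alpha Hx 1).
  - apply cont_on_of_continuous, bump_continuous.
  - intros t; rewrite bernstein1_vanishing by assumption; ring.
  - intros t; rewrite bernstein1_vanishing by assumption; ring.
Qed.

Lemma bernstein2_tilted_base (t : R) :
  bernstein x N 2 (tilted_base x N alpha) t = bump_slope x N alpha * quad x N t.
Proof.
  pose proof (x_ends x N Hx HN) as HD.
  destruct (bump_base_ends x N alpha Hx HN) as [HT0 HTN].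
  rewrite bernstein2_vanishing by (lra || (unfold tilted_base, quad; rewrite ?HT0, ?HTN; ring)).
  unfold tilted_base, bump_slope, quad; field; lra.
Qed.

Lemma tilted_fractal :
  is_fractal x N alpha (tilted_base x N alpha) (bernstein x N 2 (tilted_base x N alpha))
             (tilted_bump x N alpha).
Proof.
  apply (fractal_of_bump x N alpha Hx (-1)).
  - apply cont_on_of_continuous; intros t; unfold tilted_bump, quad; reg; apply bump_continuous.
  - intros t; rewrite bernstein2_tilted_base; unfold tilted_base; ring.
  - intros t; rewrite bernstein2_tilted_base; unfold tilted_bump; ring.
Qed.

Hypothesis Halpha : forall i : nat, (1 <= i <= N)%nat -> -1 < alpha i < 1.

Lemma bump_slope_neg : bump_slope x N alpha < 0.
Proof.
  pose proof (x_ends x N Hx HN) as HD.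
  pose proof (bump_base_mid_pos x N alpha Hx HN Halpha) as Hc.
  unfold bump_slope, Rdiv.
  assert (0 < / (x N - x 0%nat) ^ 2) by (apply Rinv_0_lt_compat; nra); nra.
Qed.

(* The average of the two fractal functions above is not in F^alpha of the average of
   their seeds: its base would have to be B_n (bump_slope * Q / 2), while it is already
   the fractal function with base bump_slope * Q / 2, and B_n Q < Q at the midpoint. *)
Lemma average_not_in_Falpha (i0 : nat) :
  (1 <= i0 <= N)%nat -> alpha i0 <> 0 ->
  ~ Falpha x N alpha
      (fun t => 1 / 2 * bump_base x N alpha t + (1 - 1 / 2) * tilted_base x N alpha t)
      (fun t => 1 / 2 * bump x N t + (1 - 1 / 2) * tilted_bump x N alpha t).
Proof.
  intros Hi0 Ha0 [n [Hn [_ Hmid]]].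
  pose proof (x_ends x N Hx HN) as HD.
  destruct (bump_base_ends x N alpha Hx HN) as [HT0 HTN].
  set (m := (x 0%nat + x N) / 2); set (K := (x N - x 0%nat) ^ 2 / 4).
  pose proof (fractal_eq_lincomb x N alpha (1 / 2) (1 - 1 / 2) _ _ _ _ _ _
                (proj2 bump_fractal) (proj2 tilted_fractal)) as Hmix.
  pose proof (fractal_eq_base_unique x N alpha Hx i0 _ _ _ _ Hi0 Ha0 Hmid Hmix m
                ltac:(unfold m; lra)) as Hbase; cbv beta in Hbase.
  rewrite (bernstein_scal x N n _ (quad x N) (bump_slope x N alpha / 2)) in Hbase
    by (intros y; unfold tilted_base; field).
  rewrite bernstein1_vanishing, bernstein2_tilted_base in Hbase by assumption.
  assert (Hlt : bernstein x N n (quad x N) m < bernstein x N n (fun _ => K) m).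
  { apply bernstein_lt; try lia; try (unfold m; lra).
    - apply quad_le_max.
    - unfold quad, K; nra. }
  assert (HQm : quad x N m = K) by (unfold quad, m, K; field).
  rewrite bernstein_const in Hlt; pose proof bump_slope_neg; nra.
Qed.
End Counterexample.

Theorem mainTheorem14 (N : nat) (x : nat -> R) (alpha : nat -> R)
  (HN : (2 <= N)%nat)
  (Hx : forall i : nat, (i < N)%nat -> x i < x (S i))
  (Halpha : forall i : nat, (1 <= i <= N)%nat -> -1 < alpha i < 1)
  (Hnz : exists i : nat, (1 <= i <= N)%nat /\ alpha i <> 0) :
  ~ convex_svm (cont_on (x 0%nat) (x N)) (Falpha x N alpha) /\
  ~ linear_svm (cont_on (x 0%nat) (x N)) (Falpha x N alpha).
Proof.
  assert (HN1 : (1 <= N)%nat) by lia.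
  destruct Hnz as [i0 [Hi0 Ha0]].
  assert (Hnot_convex : ~ convex_svm (cont_on (x 0%nat) (x N)) (Falpha x N alpha)).
  { intros Hcv; apply (average_not_in_Falpha x N alpha Hx HN1 Halpha i0 Hi0 Ha0).
    apply Hcv; [| |lra| |].
    - apply cont_on_of_continuous, bump_base_continuous.
    - apply cont_on_of_continuous; intros t; unfold tilted_base, quad; reg.
      apply bump_base_continuous.
    - exists 1%nat; split; [lia|exact (bump_fractal x N alpha Hx HN1)].
    - exists 2%nat; split; [lia|exact (tilted_fractal x N alpha Hx HN1)]. }
  split; [exact Hnot_convex|].
  intros Hlin; apply Hnot_convex, linear_svm_convex, Hlin.
Qed.
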